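(* Let $R$ be a ring and let $A=\sigma(R)\langle x_1,\dots,x_n\rangle$ be a skew PBW extension of $R$ with associated families $\Sigma,\Delta$. Suppose $R$ is $(\Sigma,\Delta)$-compatible, Abelian, NI, and satisfies condition (SA1). If $R$ is a right (resp. left) p.p.-ring, then $A$ has Property $(a.c.)$ on the right (resp. left).
   Context: All rings are associative with identity. For $S\subseteq T$ (a ring $T$), $r_T(S)=\{a\in T: Sa=0\}$ and $\ell_T(S)=\{a\in T: aS=0\}$. A ring $A$ is a skew PBW extension of $R$, written $A=\sigma(R)\langle x_1,\dots,x_n\rangle$, if: (i) $R$ is a subring of $A$ with the same identity; (ii) there are elements $x_1,\dots,x_n\in A$ such that $A$ is a free left $R$-module with basis the standard monomials $x^\alpha=x_1^{\alpha_1}\cdots x_n^{\alpha_n}$, $\alpha\in\mathbb N^n$ (with $x^0=1$); (iii) for each $i$ and each nonzero $r\in R$ there is nonzero $c_{i,r}\in R$ with $x_ir-c_{i,r}x_i\in R$; (iv) for all $i,j$ there is nonzero $d_{i,j}\in R$ with $x_jx_i-d_{i,j}x_ix_j\in R+Rx_1+\cdots+Rx_n$. For such $A$ there are injective endomorphisms $\sigma_i$ of $R$ and $\sigma_i$-derivations $\delta_i$ of $R$ with $x_ir=\sigma_i(r)x_i+\delta_i(r)$ for all $r\in R$; $\Sigma=\{\sigma_1,\dots,\sigma_n\}$, $\Delta=\{\delta_1,\dots,\delta_n\}$. For $\alpha\in\mathbb N^n$, $\sigma^\alpha=\sigma_1^{\alpha_1}\circ\cdots\circ\sigma_n^{\alpha_n}$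 and $\delta^\alpha=\delta_1^{\alpha_1}\circ\cdots\circ\delta_n^{\alpha_n}$. $R$ is $\Sigma$-compatible if for all $a,b\in R$ and $\alpha\in\mathbb N^n$: $a\sigma^\alpha(b)=0$ iff $ab=0$; $R$ is $\Delta$-compatible if for all $a,b\in R$ and $\beta\in\mathbb N^n$: $ab=0$ implies $a\delta^\beta(b)=0$; $(\Sigma,\Delta)$-compatible means both. $R$ satisfies condition (SA1) if whenever $fg=0$ for $f=a_0+a_1X_1+\cdots+a_mX_m$ and $g=b_0+b_1Y_1+\cdots+b_tY_t$ in $A$ (with $a_i,b_j\in R$ and $X_i,Y_j$ standard monomials), then $a_ib_j=0$ for all $i,j$. $R$ is Abelian if every idempotent of $R$ is central. $R$ is NI if the upper nilradical $\mathrm{nil}^*(R)$ (sum of all nil ideals) equals the set $\mathrm{nil}(R)$ of nilpotent elements. $R$ is a right (resp. left) p.p.-ring if for each $a\in R$ there is an idempotent $e$ with $r_R(a)=eR$ (resp. $\ell_R(a)=Re$). A ring $T$ has Property $(a.c.)$ on the right if for every finitely generated right ideal $I$ of $T$ there is $c\in T$ with $r_T(I)=r_T(cT)$; on the left if for every finitely generated left ideal $I$ there is $c\in T$ with $\ell_T(I)=\ell_T(Tc)$. *)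

From HB Require Import structures.
From mathcomp Require Import all_boot all_order all_algebra.
Set Implicit Arguments. Unset Strict Implicit. Unset Printing Implicit Defensive.
Import GRing.Theory.
Local Open Scope ring_scope.

Section SkewPBW.
Variables (R A : pzRingType) (n : nat).
Variable phi : {rmorphism R -> A}.
Variable x : 'I_n -> A.

Definition std_mono (alpha : n.-tuple nat) : A :=
  \prod_(i < n) x i ^+ tnth alpha i.

Definition std_eval (s : seq (n.-tuple nat * R)) : A :=
  \sum_(p <- s) phi p.2 * std_mono p.1.

(* A = sigma(R)<x_1,...,x_n> is a skew PBW extension of R, where R is
   identified with its image under the injective unital ring map phi. *)
Definition is_skewPBW : Prop :=
  [/\ injective phi,
      (* free left R-module with basis the standard monomials *)
      (forall a : A, exists s, a = std_eval s),
      (forall s, uniq (map fst s) -> std_eval s = 0 ->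
         forall p, p \in s -> p.2 = 0),
      (forall (i : 'I_n) (r : R), r != 0 ->
         exists2 c : R, c != 0 & exists r' : R, x i * phi r - phi c * x i = phi r')
    & (forall i j : 'I_n, exists2 d : R, d != 0 &
         exists (r0 : R) (r : 'I_n -> R),
           x j * x i - phi d * x i * x j = phi r0 + \sum_(k < n) phi (r k) * x k)].

Definition SigmaDelta_of (sigma delta : 'I_n -> R -> R) : Prop :=
  forall (i : 'I_n) (r : R), x i * phi r = phi (sigma i r) * x i + phi (delta i r).

End SkewPBW.

Section RingNotions.
Variable R : pzRingType.

Definition fam_pow (n : nat) (f : 'I_n -> R -> R) (alpha : 'I_n -> nat) : R -> R :=
  foldr (fun i g => iter (alpha i) (f i) \o g) id (enum 'I_n).

Definition Sigma_compatible n (sigma : 'I_n -> R -> R) : Prop :=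
  forall (a b : R) (alpha : 'I_n -> nat),
    a * fam_pow sigma alpha b = 0 <-> a * b = 0.

Definition Delta_compatible n (delta : 'I_n -> R -> R) : Prop :=
  forall (a b : R) (beta : 'I_n -> nat),
    a * b = 0 -> a * fam_pow delta beta b = 0.

Definition idempotent_el (e : R) : Prop := e * e = e.

Definition Abelian_ring : Prop :=
  forall e : R, idempotent_el e -> forall r : R, e * r = r * e.

Definition nilpotent_el (a : R) : Prop := exists k : nat, a ^+ k = 0.

Definition two_sided_ideal (I : R -> Prop) : Prop :=
  [/\ I 0, (forall a b, I a -> I b -> I (a + b)), (forall a, I a -> I (- a)),
      (forall r a, I a -> I (r * a)) & (forall r a, I a -> I (a * r))].

Definition nil_ideal (I : R -> Prop) : Prop :=
  two_sided_ideal I /\ forall a, I a -> nilpotent_el a.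

Definition upper_nilradical (a : R) : Prop :=
  exists s : seq R, a = \sum_(y <- s) y /\
    forall y, y \in s -> exists I, nil_ideal I /\ I y.

Definition NI_ring : Prop :=
  forall a : R, upper_nilradical a <-> nilpotent_el a.

Definition right_pp : Prop :=
  forall a : R, exists e : R, idempotent_el e /\
    forall b : R, a * b = 0 <-> exists c, b = e * c.

Definition left_pp : Prop :=
  forall a : R, exists e : R, idempotent_el e /\
    forall b : R, b * a = 0 <-> exists c, b = c * e.

Definition right_ideal_gen (s : seq R) (y : R) : Prop :=
  exists t : seq R, size t = size s /\ y = \sum_(i < size s) s`_i * t`_i.
Definition left_ideal_gen (s : seq R) (y : R) : Prop :=
  exists t : seq R, size t = size s /\ y = \sum_(i < size s) t`_i * s`_i.

Definition r_ann (S : R -> Prop) (a : R) : Prop := forall y, S y -> y * a = 0.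
Definition l_ann (S : R -> Prop) (a : R) : Prop := forall y, S y -> a * y = 0.

Definition ac_right : Prop :=
  forall s : seq R, exists c : R,
    forall a, r_ann (right_ideal_gen s) a <-> r_ann (right_ideal_gen [:: c]) a.
Definition ac_left : Prop :=
  forall s : seq R, exists c : R,
    forall a, l_ann (left_ideal_gen s) a <-> l_ann (left_ideal_gen [:: c]) a.

End RingNotions.

Definition SA1 (R A : pzRingType) (n : nat) (phi : {rmorphism R -> A})
  (x : 'I_n -> A) : Prop :=
  forall s t : seq (n.-tuple nat * R), uniq (map fst s) -> uniq (map fst t) ->
    std_eval phi x s * std_eval phi x t = 0 ->
    forall p q, p \in s -> q \in t -> p.2 * q.2 = 0.

From mathcomp Require Import all_boot all_order all_algebra.
Set Implicit Arguments. Unset Strict Implicit. Unset Printing Implicit Defensive.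
Import GRing.Theory.
Local Open Scope ring_scope.

(* Since R is Abelian and right p.p., the right annihilator of finitely many
   elements of R is E R for a central idempotent E.  By (Sigma, Delta)-
   compatibility (1 - e) x_i e = 0 for every idempotent e of R, hence
   (1 - e) A e = 0 = e A (1 - e) and e remains central in A.  For
   f = sum_i a_i X_i, condition (SA1) then yields r_A(f) = E A, where E R is
   the annihilator of the coefficients a_i.  So every element of A has its
   right annihilator generated by a central idempotent, and the annihilator of
   f_1 A + ... + f_k A is E A = r_A((1 - E) A) with E = E_1 ... E_k. *)

Section CentralIdempotents.
Variable T : pzRingType.

Definition central_idem (e : T) := idempotent_el e /\ forall r, GRing.comm e r.

Definition rann_gen (f e : T) := forall a, f * a = 0 <-> a = e * a.

Definition lann_gen (f e : T) := forall a, a * f = 0 <-> a = a * e.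

(* [peirce10 e t = 0] says that left multiplication by [t] maps [e T] into itself. *)
Definition peirce10 (e t : T) := (1 - e) * t * e.

Lemma idem_compl (e : T) : idempotent_el e -> idempotent_el (1 - e).
Proof.
by rewrite /idempotent_el mulrBl mul1r mulrBr mulr1 => ->; rewrite subrr subr0.
Qed.

Lemma central_idem1 : central_idem 1.
Proof. by split=> [|r]; rewrite /idempotent_el /GRing.comm ?mulr1 ?mul1r. Qed.

Lemma central_idemM (e E : T) :
  central_idem e -> central_idem E -> central_idem (e * E).
Proof.
move=> [ie ce] [iE cE]; split=> [|r].
  by rewrite /idempotent_el mulrA -(mulrA e E e) -ce mulrA ie -mulrA iE.
by rewrite /GRing.comm -mulrA cE mulrA ce mulrA.
Qed.

Lemma rann_gen_compl (e : T) : rann_gen (1 - e) e.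
Proof.
move=> a; rewrite mulrBl mul1r; split=> [/eqP|ae]; last by rewrite -ae subrr.
by rewrite subr_eq0 => /eqP.
Qed.

Lemma rann_gen_of_right_pp : Abelian_ring T -> right_pp T ->
  forall f : T, exists e, central_idem e /\ rann_gen f e.
Proof.
move=> Ab pp f; have [e [ie He]] := pp f.
exists e; split=> [|a]; first by split=> // r; apply: Ab.
apply: (iff_trans (He a)); split=> [[c ->]|->]; last by exists a.
by rewrite mulrA ie.
Qed.

Lemma rann_gen_all (s : seq T) :
  (forall f, f \in s -> exists e, central_idem e /\ rann_gen f e) ->
  exists E, central_idem E /\ forall a, (forall f, f \in s -> f * a = 0) <-> a = E * a.
Proof.
elim: s => [_|f s IH Hs].
  by exists 1; split=> [|a]; [exact: central_idem1 | rewrite mul1r].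
have [e [ce He]] := Hs f (mem_head _ _).
have [E [cE HE]] := IH (fun g gs => Hs g (mem_behead (s := f :: s) gs)).
exists (e * E); split=> [|a]; first exact: central_idemM.
split=> [H | aeE g].
  have aE : a = E * a by apply/HE => g gs; apply: H; rewrite inE gs orbT.
  by rewrite -mulrA -aE; apply/He/H/mem_head.
rewrite inE => /orP[/eqP ->|].
  by apply/He; rewrite {2}aeE !mulrA (proj1 ce) -aeE.
move: g; apply/HE.
by rewrite {2}aeE !mulrA (proj2 cE e) -(mulrA e) (proj1 cE) -aeE.
Qed.

Lemma r_ann_right_ideal_gen (s : seq T) a :
  r_ann (right_ideal_gen s) a <-> forall f, f \in s -> forall t, f * t * a = 0.
Proof.
split=> [H f fs t | H y [u [_ ->]]]; last first.
  by rewrite mulr_suml big1 // => j _; apply/H/mem_nth.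
set i := index f s; have ltis : (i < size s)%N by rewrite index_mem.
apply: H; exists (mkseq (fun j => if j == i then t else 0) (size s)).
rewrite size_mkseq; split=> //; rewrite (bigD1 (Ordinal ltis)) //=.
rewrite nth_mkseq // eqxx nth_index // big1 ?addr0 // => j /eqP neji.
rewrite nth_mkseq //; case: eqP => [eji|]; last by rewrite mulr0.
by case: neji; apply: val_inj.
Qed.

Lemma r_ann_right_ideal_gen_central (s : seq T) a :
  (forall f, f \in s -> exists e, central_idem e /\ rann_gen f e) ->
  r_ann (right_ideal_gen s) a <-> forall f, f \in s -> f * a = 0.
Proof.
move=> Hs; apply: (iff_trans (r_ann_right_ideal_gen s a)).
split=> H f fs; first by have := H f fs 1; rewrite mulr1.
have [e [[ie ce] He]] := Hs f fs; have fa := H f fs.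
have fe : f * e = 0 by apply/He/esym.
by move=> t; rewrite (He a).1 // mulrA -(mulrA f) -ce mulrA fe !mul0r.
Qed.

Lemma ac_right_of_rann_gen :
  (forall f : T, exists e, central_idem e /\ rann_gen f e) -> ac_right T.
Proof.
move=> Hgen s.
have Hs (t : seq T) f : f \in t -> exists e, central_idem e /\ rann_gen f e.
  by move=> _; apply: Hgen.
have [E [_ HE]] := rann_gen_all (Hs s).
exists (1 - E) => a.
apply: (iff_trans (r_ann_right_ideal_gen_central a (Hs s))).
apply: (iff_trans (HE a)); apply: iff_sym.
apply: (iff_trans (r_ann_right_ideal_gen_central a (Hs [:: 1 - E]))).
apply: (iff_trans _ (rann_gen_compl E a)).
by split=> [/(_ _ (mem_head _ _)) | H f]; rewrite // mem_seq1 => /eqP ->.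
Qed.

Lemma peirce10_1 (e : T) : idempotent_el e -> peirce10 e 1 = 0.
Proof. by move=> ie; rewrite /peirce10 mulr1 mulrBl mul1r ie subrr. Qed.

Lemma peirce10D (e s t : T) : peirce10 e (s + t) = peirce10 e s + peirce10 e t.
Proof. by rewrite /peirce10 mulrDr mulrDl. Qed.

(* Insert 1 = e + (1 - e) between s and t. *)
Lemma peirce10M (e s t : T) :
  peirce10 e s = 0 -> peirce10 e t = 0 -> peirce10 e (s * t) = 0.
Proof.
rewrite /peirce10 => Ps Pt.
have -> : (1 - e) * (s * t) * e =
    (1 - e) * s * e * (t * e) + (1 - e) * s * ((1 - e) * t * e).
  transitivity ((1 - e) * s * ((e + (1 - e)) * t * e)).
    by rewrite (addrC e) subrK mul1r !mulrA.
  by rewrite [(e + _) * t]mulrDl mulrDl mulrDr !mulrA.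
by rewrite Ps Pt mul0r mulr0 addr0.
Qed.

Lemma peirce10_comm (e t : T) :
  peirce10 e t = 0 -> peirce10 (1 - e) t = 0 -> GRing.comm t e.
Proof.
rewrite /peirce10 subKr => P10 P01; transitivity (e * t * e).
  by rewrite -{1}[t]mul1r -(subrKC e 1) mulrDl mulrDl P10 addr0.
by rewrite -{2}[e * t]mulr1 -(subrKC e 1) mulrDr P01 addr0.
Qed.

End CentralIdempotents.

Section Converse.
Variable T : pzRingType.

Lemma central_idemC (e : T) : @central_idem T^c e <-> central_idem e.
Proof. by split=> [[ie ce]|[ie ce]]; split=> // r; apply/esym/ce. Qed.

Lemma lann_gen_of_left_pp : Abelian_ring T -> left_pp T ->
  forall f : T, exists e, central_idem e /\ lann_gen f e.
Proof.
move=> Ab pp f.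
have AbC : Abelian_ring T^c by move=> e ie r; apply/esym/Ab.
have [e [/central_idemC ce He]] := rann_gen_of_right_pp AbC pp f.
by exists e.
Qed.

Lemma lann_gen_all (s : seq T) :
  (forall f, f \in s -> exists e, central_idem e /\ lann_gen f e) ->
  exists E, central_idem E /\ forall a, (forall f, f \in s -> a * f = 0) <-> a = a * E.
Proof.
move=> Hs.
have HsC f : f \in s -> exists e, @central_idem T^c e /\ @rann_gen T^c f e.
  by move=> /Hs [e [/central_idemC ce He]]; exists e.
by have [E [/central_idemC cE HE]] := @rann_gen_all T^c s HsC; exists E.
Qed.

Lemma ac_left_of_lann_gen :
  (forall f : T, exists e, central_idem e /\ lann_gen f e) -> ac_left T.
Proof.
move=> Hgen; apply: (@ac_right_of_rann_gen T^c) => f.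
by have [e [/central_idemC ce He]] := Hgen f; exists e.
Qed.

End Converse.

Lemma fam_pow_single (T : pzRingType) n (f : 'I_n -> T -> T) (k : 'I_n) r :
  fam_pow f (fun i => (i == k) : nat) r = f k r.
Proof.
rewrite /fam_pow; have : k \in enum 'I_n by rewrite mem_enum.
elim: (enum 'I_n) (enum_uniq 'I_n) r => [|i l IH] //= /andP[il ul] r.
rewrite in_cons; case: eqP => [-> _|/eqP ki /= kl].
  rewrite eqxx /=; congr (f i _); elim: l il {IH ul} => //= j l IH.
  by rewrite in_cons negb_or eq_sym => /andP[/negPf -> /IH].
by rewrite eq_sym (negPf ki) IH.
Qed.

Section SkewPBW.
Variables (R A : pzRingType) (n : nat) (phi : {rmorphism R -> A}) (x : 'I_n -> A).
Variables (sigma delta : 'I_n -> R -> R).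
Hypothesis std_eval_surj : forall a : A, exists s, a = std_eval phi x s.
Hypothesis SD : SigmaDelta_of phi x sigma delta.
Hypotheses (Sc : Sigma_compatible sigma) (Dc : Delta_compatible delta).
Hypothesis Ab : Abelian_ring R.

Lemma idem_phi v : idempotent_el v -> idempotent_el (phi v).
Proof. by rewrite /idempotent_el -rmorphM => ->. Qed.

Lemma peirce10_idem_phi v r : idempotent_el v -> peirce10 (phi v) (phi r) = 0.
Proof.
move=> iv; rewrite /peirce10 -(rmorph1 phi) -rmorphB -!rmorphM -mulrA -(Ab iv).
by rewrite mulrA mulrBl mul1r iv subrr mul0r rmorph0.
Qed.

Lemma peirce10_idem_x v k : idempotent_el v -> peirce10 (phi v) (x k) = 0.
Proof.
move=> iv; have v10 : (1 - v) * v = 0 by rewrite mulrBl mul1r iv subrr.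
have s10 : (1 - v) * sigma k v = 0 by rewrite -(fam_pow_single sigma k); apply/Sc.
have d10 : (1 - v) * delta k v = 0 by rewrite -(fam_pow_single delta k); apply: Dc.
rewrite /peirce10 -(rmorph1 phi) -rmorphB -mulrA SD mulrDr mulrA -!rmorphM.
by rewrite s10 d10 rmorph0 mul0r add0r.
Qed.

Lemma peirce10_idem_std_mono v al :
  idempotent_el v -> peirce10 (phi v) (std_mono x al) = 0.
Proof.
move=> iv; apply: (big_ind (fun t => peirce10 (phi v) t = 0)) => [|s t|i _].
- exact/peirce10_1/idem_phi.
- exact: peirce10M.
elim: (tnth al i) => [|m IH]; first exact/peirce10_1/idem_phi.
by rewrite exprS; apply: peirce10M => //; apply: peirce10_idem_x.
Qed.

Lemma peirce10_idem v t : idempotent_el v -> peirce10 (phi v) t = 0.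
Proof.
move=> iv; have [s ->] := std_eval_surj t.
apply: (big_ind (fun t => peirce10 (phi v) t = 0)) => [|a b Pa Pb|p _].
- by rewrite /peirce10 mulr0 mul0r.
- by rewrite peirce10D Pa Pb addr0.
by apply: peirce10M; [apply: peirce10_idem_phi | apply: peirce10_idem_std_mono].
Qed.

Lemma central_idem_phi v : idempotent_el v -> central_idem (phi v).
Proof.
move=> iv; split=> [|t]; first exact: idem_phi.
apply/esym/peirce10_comm; first exact: peirce10_idem.
by rewrite -(rmorph1 phi) -rmorphB; apply/peirce10_idem/idem_compl.
Qed.

Definition std_merge (s : seq (n.-tuple nat * R)) : seq (n.-tuple nat * R) :=
  [seq (al, \sum_(p <- s | p.1 == al) p.2) | al <- undup (map fst s)].

Lemma std_merge_uniq s : uniq (map fst (std_merge s)).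
Proof. by rewrite -map_comp map_id undup_uniq. Qed.

Lemma std_eval_merge s : std_eval phi x (std_merge s) = std_eval phi x s.
Proof.
rewrite /std_eval big_map /=.
under eq_bigr => al _ do rewrite rmorph_sum mulr_suml big_mkcond.
rewrite exchange_big; apply: eq_big_seq => p ps; rewrite -big_mkcond -big_filter.
have -> : [seq al <- undup (map fst s) | p.1 == al] = [:: p.1].
  have p1s : p.1 \in undup (map fst s) by rewrite mem_undup map_f.
  rewrite -(filter_pred1_uniq (undup_uniq _) p1s).
  by apply: eq_filter => al; rewrite /= eq_sym.
by rewrite big_seq1.
Qed.

Lemma std_eval_surj_uniq a : exists s, uniq (map fst s) /\ a = std_eval phi x s.
Proof.
have [s ->] := std_eval_surj a.
by exists (std_merge s); rewrite std_merge_uniq std_eval_merge.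
Qed.

Lemma mulr_std_eval c s :
  phi c * std_eval phi x s = \sum_(p <- s) phi (c * p.2) * std_mono x p.1.
Proof. by rewrite /std_eval mulr_sumr; apply: eq_bigr => p _; rewrite mulrA rmorphM. Qed.

Lemma std_eval_mul_idem e s : idempotent_el e ->
  std_eval phi x s * phi e = \sum_(p <- s) phi (p.2 * e) * std_mono x p.1.
Proof.
move=> /central_idem_phi [_ ce]; rewrite /std_eval mulr_suml.
by apply: eq_bigr => p _; rewrite rmorphM -!mulrA ce.
Qed.

Hypothesis SA : SA1 phi x.

Lemma rann_gen_skewPBW : right_pp R ->
  forall f : A, exists e, central_idem e /\ rann_gen f e.
Proof.
move=> pp f; have [s [us ->]] := std_eval_surj_uniq f.
have [E [[iE _] HE]] :=
  rann_gen_all (fun r (_ : r \in map snd s) => rann_gen_of_right_pp Ab pp r).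
have coefE b : (forall p, p \in s -> p.2 * b = 0) <-> b = E * b.
  apply: iff_trans (HE b); split=> H; last by move=> p ps; apply/H/map_f.
  by move=> r /mapP[p ps ->]; apply: H.
exists (phi E); split=> [|a]; first exact: central_idem_phi.
split=> [fa | ->]; last first.
  rewrite mulrA std_eval_mul_idem // big1_seq ?mul0r // => p /andP[_ ps].
  by rewrite ((coefE E).2 (esym iE) p ps) rmorph0 mul0r.
have [u [uu ea]] := std_eval_surj_uniq a; rewrite ea in fa *.
rewrite mulr_std_eval /std_eval; apply: eq_big_seq => q qu.
by rewrite -(coefE q.2).1 // => p ps; apply: SA us uu fa p q ps qu.
Qed.

Lemma lann_gen_skewPBW : left_pp R ->
  forall f : A, exists e, central_idem e /\ lann_gen f e.
Proof.
move=> pp f; have [s [us ->]] := std_eval_surj_uniq f.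
have [E [[iE _] HE]] :=
  lann_gen_all (fun r (_ : r \in map snd s) => lann_gen_of_left_pp Ab pp r).
have coefE b : (forall p, p \in s -> b * p.2 = 0) <-> b = b * E.
  apply: iff_trans (HE b); split=> H; last by move=> p ps; apply/H/map_f.
  by move=> r /mapP[p ps ->]; apply: H.
exists (phi E); split=> [|a]; first exact: central_idem_phi.
split=> [af | ->]; last first.
  rewrite -mulrA mulr_std_eval big1_seq ?mulr0 // => p /andP[_ ps].
  by rewrite ((coefE E).2 (esym iE) p ps) rmorph0 mul0r.
have [u [uu ea]] := std_eval_surj_uniq a; rewrite ea in af *.
rewrite std_eval_mul_idem // /std_eval; apply: eq_big_seq => q qu.
by rewrite -(coefE q.2).1 // => p ps; apply: SA uu us af q p qu ps.
Qed.

End SkewPBW.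

Theorem mainTheorem2 (R A : pzRingType) (n : nat) (phi : {rmorphism R -> A})
  (x : 'I_n -> A) (sigma delta : 'I_n -> R -> R) :
  is_skewPBW phi x ->
  SigmaDelta_of phi x sigma delta ->
  Sigma_compatible sigma -> Delta_compatible delta ->
  Abelian_ring R -> NI_ring R -> SA1 phi x ->
  (right_pp R -> ac_right A) /\ (left_pp R -> ac_left A).
Proof.
move=> [_ surj _ _ _] SD Sc Dc Ab _ SA; split=> pp.
  exact/ac_right_of_rann_gen/(rann_gen_skewPBW surj SD Sc Dc Ab SA pp).
exact/ac_left_of_lann_gen/(lann_gen_skewPBW surj SD Sc Dc Ab SA pp).
Qed.
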